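(* Let $n\geqslant2$, $\lambda>0$, distinct points $p_1,\ldots,p_M\in\mathbb{Z}^n$ and positive integers $n_1,\ldots,n_M$ be given, and let $g=4\pi\sum_{j=1}^Mn_j\delta_{p_j}$. Let $\Omega_0\subset\mathbb{Z}^n$ be a finite set containing $\{p_j\}_{j=1}^M$ and let $\Omega$ be a finite connected subset with $\Omega_0\subset\Omega$. Fix a constant $K>2\lambda$. Let $u_0=0$ and, for $k\geqslant1$, let $u_k:\overline{\Omega}\to\mathbb{R}$ solve $$(\Delta-K)u_k=\lambda e^{u_{k-1}}(e^{u_{k-1}}-1)+g-Ku_{k-1}\ \text{ on }\Omega,\qquad u_k=0\ \text{ on }\delta\Omega.$$ Then for each $k$, $u_k$ is uniquely defined, and $0=u_0\geqslant u_1\geqslant u_2\geqslant\cdots$ on $\overline\Omega$.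
   Context: $\mathbb{Z}^n$ is the integer lattice graph with $x\sim y$ iff $\sum_i|x_i-y_i|=1$. For a finite $\Omega\subset\mathbb{Z}^n$, $\delta\Omega=\{y\in\mathbb{Z}^n\setminus\Omega:\exists x\in\Omega,\ y\sim x\}$ and $\overline\Omega=\Omega\cup\delta\Omega$. For $u:\overline\Omega\to\mathbb{R}$ and $x\in\Omega$, $\Delta u(x)=\sum_{y\sim x}(u(y)-u(x))$. $\delta_p$ is the function equal to $1$ at $p$ and $0$ elsewhere. *)

From HB Require Import structures.
From mathcomp Require Import all_boot all_order all_algebra.
From mathcomp Require Import all_classical all_reals all_analysis.
Set Implicit Arguments. Unset Strict Implicit. Unset Printing Implicit Defensive.
Import Order.TTheory GRing.Theory Num.Theory.
Local Open Scope ring_scope.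

Definition Zn (n : nat) := (n.-tuple int)%type.

Definition adj (n : nat) (x y : Zn n) : bool :=
  (\sum_(i < n) `|tnth x i - tnth y i|)%R == 1.

Definition shift (n : nat) (x : Zn n) (i : 'I_n) (s : int) : Zn n :=
  [tuple (tnth x j + (if j == i then s else 0)) | j < n].

Definition lap (R : realType) (n : nat) (u : Zn n -> R) (x : Zn n) : R :=
  \sum_(i < n) ((u (shift x i 1) - u x) + (u (shift x i (-1)) - u x)).

Definition bdry (n : nat) (Om : seq (Zn n)) (y : Zn n) : Prop :=
  y \notin Om /\ exists2 x, x \in Om & adj y x.

Definition clos (n : nat) (Om : seq (Zn n)) (y : Zn n) : Prop :=
  y \in Om \/ bdry Om y.

Definition connected_set (n : nat) (Om : seq (Zn n)) : Prop :=
  forall x y, x \in Om -> y \in Om ->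
    exists s : seq (Zn n), all (mem Om) s /\ path (@adj n) x s /\ last x s = y.

Definition gsrc (R : realType) (n M : nat) (p : 'I_M -> Zn n) (nn : 'I_M -> nat)
  (x : Zn n) : R :=
  4 * pi * \sum_(j < M) ((nn j)%:R * (if x == p j then 1 else 0)).

Definition solves_step (R : realType) (n : nat) (Om : seq (Zn n))
  (lam K : R) (g : Zn n -> R) (w v : Zn n -> R) : Prop :=
  (forall x, x \in Om ->
     lap v x - K * v x = lam * expR (w x) * (expR (w x) - 1) + g x - K * w x)
  /\ (forall y, bdry Om y -> v y = 0).

From Pilot Require Import Defs.
From HB Require Import structures.
From mathcomp Require Import all_boot all_order all_algebra.
From mathcomp Require Import all_classical all_reals all_analysis.
From mathcomp Require Import ring lra.
Import Order.TTheory GRing.Theory Num.Theory.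
Local Open Scope ring_scope.

Set Implicit Arguments.
Unset Strict Implicit.
Unset Printing Implicit Defensive.

(* Write L = Delta - K.  Since K > 0, L satisfies a maximum principle: if
   L w >= 0 on Omega and w <= 0 on the boundary then w <= 0, because at a
   positive maximum of w in Omega we would have Delta w <= 0 < K w.  Hence the
   Dirichlet problem L v = f on Omega, v = 0 on the boundary, has at most one
   solution, and being a square linear system in the values of v on Omega it
   is also solvable.  For monotonicity, L (u_(k+1) - u_k) = F(u_k) - F(u_(k-1))
   with F(t) = lam e^t (e^t - 1) - K t, which is nonincreasing on (-oo, 0] as
   soon as K >= lam; so the comparison principle propagates
   u_k <= u_(k-1) <= 0 by induction, starting from L u_1 = g >= 0 = L u_0. *)

Section ScreenedLaplacian.
Variables (R : realType) (n : nat) (K : R).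

Definition screened_lap (v : Zn n -> R) (x : Zn n) : R := lap v x - K * v x.

Lemma adj_shift (x : Zn n) (i : 'I_n) (s : int) :
  `|s| = 1 -> adj (Defs.shift x i s) x.
Proof.
move=> s_unit; rewrite /adj (bigD1 i) //= big1 ?addr0.
  by rewrite /Defs.shift tnth_mktuple eqxx addrAC subrr add0r s_unit.
by move=> j /negbTE ji; rewrite /Defs.shift tnth_mktuple ji addr0 subrr normr0.
Qed.

Lemma screened_lapB (v w : Zn n -> R) x :
  screened_lap (fun y => v y - w y) x = screened_lap v x - screened_lap w x.
Proof.
rewrite /screened_lap; have -> : lap (fun y => v y - w y) x = lap v x - lap w x.
  by rewrite /lap -sumrB; apply: eq_bigr => i _; ring.
by ring.
Qed.

Lemma screened_lap0 x : screened_lap (fun=> 0) x = 0.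
Proof. by rewrite /screened_lap /lap big1 ?mulr0 ?subr0 // => i _; rewrite addr0. Qed.

Lemma screened_lap_sum m (c : 'I_m -> R) (f : 'I_m -> Zn n -> R) x :
  screened_lap (fun y => \sum_i c i * f i y) x = \sum_i c i * screened_lap (f i) x.
Proof.
rewrite /screened_lap /lap mulr_sumr.
under [RHS]eq_bigr => j _ do rewrite mulrBr mulr_sumr.
rewrite sumrB exchange_big /=; congr (_ - _).
  by apply: eq_bigr => i _; rewrite -!sumrB -big_split; apply: eq_bigr => j _ /=; ring.
by apply: eq_bigr => j _; rewrite mulrCA.
Qed.

End ScreenedLaplacian.

Section MaximumPrinciple.
Variables (R : realType) (n : nat) (Om : seq (Zn n)) (K : R).
Hypothesis K_gt0 : 0 < K.

Lemma screened_max_principle (w : Zn n -> R) :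
  (forall x, x \in Om -> 0 <= screened_lap K w x) ->
  (forall y, bdry Om y -> w y <= 0) ->
  forall x, clos Om x -> w x <= 0.
Proof.
move=> Lw_ge0 w_bdry x [xOm|/w_bdry //].
have [x0 _ w_max] := @arg_maxP _ _ (seq_sub Om) (SeqSub xOm) xpredT (w \o val) erefl.
set x0' := val x0 in w_max; have x0Om : x0' \in Om := valP x0.
suff w_x0_le0 : w x0' <= 0 by exact: le_trans (w_max (SeqSub xOm) erefl) w_x0_le0.
rewrite leNgt; apply/negP => w_x0_gt0.
have w_nbr y : adj y x0' -> w y <= w x0'.
  move=> y_x0; have [yOm|yOm] := boolP (y \in Om); first exact: (w_max (SeqSub yOm)).
  by apply: le_trans (ltW w_x0_gt0); apply: w_bdry; split=> //; exists x0'.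
have lap_le0 : lap w x0' <= 0.
  apply: sumr_le0 => i _; rewrite -[0](addr0 0).
  by apply: lerD; rewrite subr_le0; apply: w_nbr; apply: adj_shift; rewrite ?normrN.
have := Lw_ge0 _ x0Om; rewrite /screened_lap.
have := mulr_gt0 K_gt0 w_x0_gt0; lra.
Qed.

Lemma screened_comparison (v w : Zn n -> R) :
  (forall x, x \in Om -> screened_lap K w x <= screened_lap K v x) ->
  (forall y, bdry Om y -> v y <= w y) ->
  forall x, clos Om x -> v x <= w x.
Proof.
move=> Lwv v_bdry x x_clos; rewrite -subr_le0.
apply: (screened_max_principle (w := fun y => v y - w y)) x_clos.
- by move=> y yOm; rewrite screened_lapB subr_ge0 Lwv.
- by move=> y /v_bdry; rewrite subr_le0.
Qed.

Lemma screened_dirichlet_unique (v w : Zn n -> R) :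
  (forall x, x \in Om -> screened_lap K v x = screened_lap K w x) ->
  (forall y, bdry Om y -> v y = w y) ->
  forall x, clos Om x -> v x = w x.
Proof.
move=> Lvw vw_bdry x x_clos; apply/eqP; rewrite eq_le.
by rewrite !screened_comparison // => [y /Lvw|y /vw_bdry|y /Lvw|y /vw_bdry] ->.
Qed.

Lemma solves_step_unique (lam : R) (g w v v' : Zn n -> R) :
  solves_step Om lam K g w v -> solves_step Om lam K g w v' ->
  forall x, clos Om x -> v x = v' x.
Proof.
move=> [Lv v_bdry] [Lv' v'_bdry]; apply: screened_dirichlet_unique.
- by move=> x xOm; rewrite /screened_lap Lv ?Lv'.
- by move=> y y_bdry; rewrite v_bdry ?v'_bdry.
Qed.

End MaximumPrinciple.

Section DirichletSolver.
Variables (R : realType) (n : nat) (Om : seq (Zn n)) (K : R).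
Hypothesis K_gt0 : 0 < K.

Definition site_count := size (undup Om).

Definition site (i : 'I_site_count) : Zn n := nth [tuple 0 | _ < n] (undup Om) i.

Definition site_indicator (i : 'I_site_count) (y : Zn n) : R := (site i == y)%:R.

Definition extend (v : 'rV[R]_site_count) (y : Zn n) : R :=
  \sum_i v 0 i * site_indicator i y.

Definition dirichlet_mx : 'M[R]_site_count :=
  \matrix_(i, j) screened_lap K (site_indicator i) (site j).

Definition dirichlet_solve (f : Zn n -> R) : Zn n -> R :=
  extend (\row_j f (site j) *m invmx dirichlet_mx).

Lemma site_in i : site i \in Om.
Proof. by rewrite -mem_undup mem_nth. Qed.

Lemma siteP x : x \in Om -> exists j, x = site j.
Proof.
rewrite -mem_undup => x_in; have x_idx : (index x (undup Om) < site_count)%N.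
  by rewrite index_mem.
by exists (Ordinal x_idx); rewrite /site nth_index.
Qed.

Lemma extend_site v j : extend v (site j) = v 0 j.
Proof.
rewrite /extend (bigD1 j) //= big1 ?addr0; first by rewrite /site_indicator eqxx mulr1.
move=> i ij; rewrite /site_indicator /site nth_uniq ?undup_uniq //.
by rewrite val_eqE (negbTE ij) mulr0.
Qed.

Lemma extend_out v y : y \notin Om -> extend v y = 0.
Proof.
move=> yOm; rewrite /extend big1 // => i _; rewrite /site_indicator.
by case: eqP => [site_y|_]; [move: yOm; rewrite -site_y site_in | rewrite mulr0].
Qed.

Lemma screened_lap_extend v j :
  screened_lap K (extend v) (site j) = (v *m dirichlet_mx) 0 j.
Proof.
by rewrite screened_lap_sum !mxE; apply: eq_bigr => i _; rewrite mxE.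
Qed.

Lemma dirichlet_mx_unit : dirichlet_mx \in unitmx.
Proof.
rewrite -row_free_unit -kermx_eq0; apply/eqP/matrixP => i j; rewrite [RHS]mxE.
set v := row i (kermx dirichlet_mx).
have v_ker : v *m dirichlet_mx = 0 by rewrite -row_mul mulmx_ker row0.
have -> : kermx dirichlet_mx i j = v 0 j by rewrite [RHS]mxE.
rewrite -extend_site.
apply: (screened_dirichlet_unique (w := fun=> 0) K_gt0 _ _ (or_introl (site_in j))).
- by move=> x /siteP [k ->]; rewrite screened_lap_extend v_ker screened_lap0 mxE.
- by move=> y [yOm _]; exact: extend_out.
Qed.

Lemma screened_lap_dirichlet_solve f x :
  x \in Om -> screened_lap K (dirichlet_solve f) x = f x.
Proof.
move=> /siteP [j ->]; rewrite screened_lap_extend -mulmxA mulVmx ?dirichlet_mx_unit //.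
by rewrite mulmx1 mxE.
Qed.

Lemma dirichlet_solve_out f y : y \notin Om -> dirichlet_solve f y = 0.
Proof. exact: extend_out. Qed.

End DirichletSolver.

Section Reaction.
Variable R : realType.

Lemma expR_sub_le (a b : R) : a <= b -> b <= 0 -> expR b - expR a <= b - a.
Proof.
move=> ab b_le0.
have -> : expR a = expR (a - b) * expR b by rewrite -expRD subrK.
have := expR_ge1Dx (a - b); have := expR_gt0 b.
have : expR b <= 1 by rewrite expR_le1.
have : expR (a - b) <= 1 by rewrite expR_le1 subr_le0.
nra.
Qed.

Definition reaction (lam K t : R) : R := lam * expR t * (expR t - 1) - K * t.

Lemma reaction_antitone (lam K a b : R) : 0 <= lam -> lam <= K ->
  a <= b -> b <= 0 -> reaction lam K b <= reaction lam K a.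
Proof.
move=> lam_ge0 lam_le_K ab b_le0.
have exp_ab : expR a <= expR b by rewrite ler_expR.
have exp_b : expR b <= 1 by rewrite expR_le1.
have exp_a : 0 < expR a := expR_gt0 a.
have exp_lip := expR_sub_le ab b_le0.
have diff : (expR b - expR a) * (expR b + expR a - 1) <= b - a by nra.
have : lam * ((expR b - expR a) * (expR b + expR a - 1)) <= lam * (b - a).
  exact: ler_wpM2l.
have : lam * (b - a) <= K * (b - a) by apply: ler_wpM2r; rewrite ?subr_ge0.
rewrite /reaction; nra.
Qed.

End Reaction.

Section Iteration.
Variables (R : realType) (n : nat) (Om : seq (Zn n)) (lam K : R) (g : Zn n -> R).
Hypotheses (K_gt0 : 0 < K) (lam_ge0 : 0 <= lam) (lam_le_K : lam <= K).
Hypothesis g_ge0 : forall x, 0 <= g x.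

Fixpoint dirichlet_iter (k : nat) : Zn n -> R :=
  if k is k'.+1 then
    let w := dirichlet_iter k' in
    dirichlet_solve Om K (fun x => lam * expR (w x) * (expR (w x) - 1) + g x - K * w x)
  else fun=> 0.

Local Notation u := dirichlet_iter.

Lemma dirichlet_iter_solves k : solves_step Om lam K g (u k) (u k.+1).
Proof.
split=> [x xOm|y [yOm _]]; last exact: dirichlet_solve_out.
exact: (screened_lap_dirichlet_solve K_gt0).
Qed.

Lemma dirichlet_iter_antitone k x : clos Om x -> u k.+1 x <= u k x <= 0.
Proof.
elim: k x => [|k IH] x x_clos.
  rewrite lexx andbT; apply: (screened_comparison K_gt0 _ _ x_clos) => [y yOm|y y_bdry].
    rewrite [screened_lap K (u 0) y]screened_lap0 /screened_lap.
    rewrite (dirichlet_iter_solves 0).1 //= expR0 subrr !mulr0 subr0 add0r.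
    exact: g_ge0.
  by rewrite (dirichlet_iter_solves 0).2.
have [Lk bk] := dirichlet_iter_solves k; have [Lk1 bk1] := dirichlet_iter_solves k.+1.
have /andP[uk1_le_uk uk_le0] := IH x x_clos.
rewrite (le_trans uk1_le_uk uk_le0) andbT.
apply: (screened_comparison K_gt0 _ _ x_clos) => [y yOm|y y_bdry].
  have /andP[uy_le uy_le0] := IH y (or_introl yOm).
  rewrite /screened_lap Lk // Lk1 //.
  have := reaction_antitone lam_ge0 lam_le_K uy_le uy_le0; rewrite /reaction; lra.
by rewrite bk1 // bk.
Qed.

End Iteration.

Lemma gsrc_ge0 (R : realType) (n M : nat) (p : 'I_M -> Zn n) (nn : 'I_M -> nat) x :
  0 <= gsrc R p nn x.
Proof.
rewrite /gsrc !mulr_ge0 ?pi_ge0 // sumr_ge0 // => j _.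
by rewrite mulr_ge0 //; case: ifP.
Qed.

Theorem lemma3p1 (R : realType) (n M : nat) (lam K : R)
  (p : 'I_M -> Zn n) (nn : 'I_M -> nat) (Om0 Om : seq (Zn n)) :
  (2 <= n)%N -> 0 < lam -> injective p -> (forall j, (0 < nn j)%N) ->
  (forall j, p j \in Om0) -> {subset Om0 <= Om} -> connected_set Om ->
  2 * lam < K ->
  exists u : nat -> Zn n -> R,
    (forall x, clos Om x -> u 0%N x = 0) /\
    forall k : nat,
      solves_step Om lam K (gsrc R p nn) (u k) (u k.+1) /\
      (forall v, solves_step Om lam K (gsrc R p nn) (u k) v ->
         forall x, clos Om x -> v x = u k.+1 x) /\
      (forall x, clos Om x -> u k.+1 x <= u k x).
Proof.
move=> _ lam_gt0 _ _ _ _ _ K_gt.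
have K_gt0 : 0 < K by lra.
have lam_le_K : lam <= K by lra.
have u_solves := dirichlet_iter_solves Om lam (gsrc R p nn) K_gt0.
have u_antitone := dirichlet_iter_antitone (Om := Om) K_gt0 (ltW lam_gt0) lam_le_K
  (@gsrc_ge0 R n M p nn).
exists (dirichlet_iter Om lam K (gsrc R p nn)); split=> // k; split; [|split].
- exact: u_solves.
- by move=> v v_solves; apply: (solves_step_unique K_gt0 v_solves); exact: u_solves.
- by move=> x /(u_antitone k) /andP[].
Qed.
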